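(* Let $\mathcal{F}$ be a family of objects such that any subset of $n$ objects from $\mathcal{F}$ admits a unimax coloring with $\gamma_{\mathrm{um}}(n)$ colors, where $\gamma_{\mathrm{um}}$ is non-decreasing. Then one can maintain a conflict-free coloring of a set $S$ of objects from $\mathcal{F}$ under insertions such that the number of used colors is $O(\gamma_{\mathrm{um}}(n)\log^2 n)$ and the number of recolorings per insertion is at most $\lceil\log n\rceil$, where $n$ is the current number of objects in $S$.
   Context: The setting is abstract: either objects are regions in the plane and colorings are considered with respect to points, or objects are points and colorings are considered with respect to a fixed family of ranges. For a point (resp. range) $q$, let $S_q$ be the set of objects of $S$ in relation with $q$ (regions containing $q$, resp. points contained in $q$). A coloring of $S$ is conflict-free if for every $q$ with $S_q\neq\emptyset$ some object of $S_q$ has a color unique within $S_q$; it is unimax if, with colors being integers, the maximum color in $S_q$ is attained by exactly one object of $S_q$ whenever $S_q\ne\emptyset$. The number of recolorings of an insertion is the number of previously present objects whose color changes. *)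

(* Abstract setting: objects of type O (an eqType),
   "witnesses" q of type Q (points, resp. ranges), and a relation
   rel q o meaning "o is in relation with q". *)
From mathcomp Require Import all_boot.
Set Implicit Arguments. Unset Strict Implicit. Unset Printing Implicit Defensive.

Definition num_colors (O : eqType) (col : O -> nat) (S : seq O) : nat :=
  size (undup (map col S)).

Definition conflict_free (O : eqType) (Q : Type) (rel : Q -> O -> bool)
    (S : seq O) (col : O -> nat) : Prop :=
  forall q : Q, has (rel q) S ->
    exists2 o, (o \in S) && rel q o &
      forall o', o' \in S -> rel q o' -> o' != o -> col o' != col o.

Definition unimax (O : eqType) (Q : Type) (rel : Q -> O -> bool)
    (S : seq O) (col : O -> nat) : Prop :=
  forall q : Q, has (rel q) S ->
    exists2 o, (o \in S) && rel q o &
      forall o', o' \in S -> rel q o' -> o' != o -> col o' < col o.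

Definition num_recolorings (O : eqType) (S : seq O) (col_old col_new : O -> nat) : nat :=
  count (fun o => col_new o != col_old o) S.

(* For every level j, the inserted objects are cut into consecutive blocks of
   2^j objects.  Once block b of level j is complete (after (b+1) 2^j
   insertions) we fix a unimax coloring g of it, and its objects are promoted
   to level j one per insertion, in decreasing order of g-color (ties broken
   by arrival).  An object is colored according to the highest level it has
   reached: level j owns a palette of 4 gamma(2^j) colors, recording the rank
   of the g-color within the block and the block number modulo 4.  An object
   leaves level j less than three block lengths after its level-j block is
   complete, so at any time the objects at level j come from at most three
   consecutive blocks, which the block number modulo 4 tells apart.

   For a point q, take the highest level j reached by an object related to q,
   and a block of level j containing such an object.  The g-maximal object of
   that block related to q is promoted no later than the others, so it is at
   level j too, and its color is unique among the objects related to q.  An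
   insertion at time n promotes at most one object per level 1 <= j <= log n,
   which bounds the recolorings, and the palettes of the levels up to log n
   give O(gamma(n) log n) colors. *)

From mathcomp Require Import all_boot zify.
From Stdlib Require Import IndefiniteDescription.
Set Implicit Arguments. Unset Strict Implicit. Unset Printing Implicit Defensive.

Lemma sub_count_lt (T : eqType) (a1 a2 : pred T) (s : seq T) x :
  subpred a1 a2 -> x \in s -> a2 x -> ~~ a1 x -> count a1 s < count a2 s.
Proof.
move=> sub12 sx a2x /negbTE a1x; have /permP count_rem := perm_to_rem sx.
by rewrite !count_rem /= a1x a2x ltnS; apply: sub_count.
Qed.

Lemma exp_le_up_log p j k : 1 < p -> p ^ j <= k -> j <= up_log p k.
Proof.
by move=> p_gt1 pj_le_k; rewrite -(leq_exp2l _ _ p_gt1) (leq_trans pj_le_k) ?up_logP.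
Qed.

Lemma eq_in_conflict_free (O : eqType) (Q : Type) (rel : Q -> O -> bool) S col1 col2 :
  {in S, col1 =1 col2} -> conflict_free rel S col2 -> conflict_free rel S col1.
Proof.
move=> eq_col cf2 q has_q; have [o /andP [So rel_o] uniq_o] := cf2 q has_q.
exists o; first by rewrite So.
by move=> o' So' rel_o' neq_o; rewrite !eq_col //; apply: uniq_o.
Qed.

Lemma eq_in_num_colors (O : eqType) (col1 col2 : O -> nat) S :
  {in S, col1 =1 col2} -> num_colors col1 S = num_colors col2 S.
Proof. by move=> /eq_in_map eq_col; rewrite /num_colors eq_col. Qed.

Lemma eq_in_num_recolorings (O : eqType) (old1 old2 new1 new2 : O -> nat) S :
  {in S, old1 =1 old2} -> {in S, new1 =1 new2} ->
  num_recolorings S old1 new1 = num_recolorings S old2 new2.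
Proof.
by move=> eq_old eq_new; apply: eq_in_count => o So; rewrite /= eq_old ?eq_new.
Qed.

Lemma num_colors_le (O : eqType) (col : O -> nat) S m :
  {in S, forall o, col o < m} -> num_colors col S <= m.
Proof.
move=> col_lt; rewrite -(size_iota 0 m); apply: uniq_leq_size (undup_uniq _) _ => c.
by rewrite mem_undup mem_iota => /mapP [o So ->]; rewrite col_lt.
Qed.

Section Blocks.
Variable O : eqType.
Implicit Types (s : seq O) (o : O).

Definition block s j b := take (2 ^ j) (drop (b * 2 ^ j) s).
Definition block_id s j o := index o s %/ 2 ^ j.
Definition block_of s j o := block s j (block_id s j o).

Lemma block_subset s j b : {subset block s j b <= s}.
Proof. by move=> o /mem_take /mem_drop. Qed.

Lemma block_uniq s j b : uniq s -> uniq (block s j b).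
Proof. by move=> us; rewrite take_uniq // drop_uniq. Qed.

Lemma block_all (F : pred O) s j b : all F s -> all F (block s j b).
Proof. by move=> /allP Fs; apply/allP => o /block_subset /Fs. Qed.

Lemma size_block_le s j b : size (block s j b) <= 2 ^ j.
Proof. by rewrite size_take; case: ltnP => // /ltnW. Qed.

Lemma size_block s j b : b.+1 * 2 ^ j <= size s -> size (block s j b) = 2 ^ j.
Proof. by rewrite /block size_take size_drop mulSn; case: ifP; lia. Qed.

Lemma block_take s n j b : b.+1 * 2 ^ j <= n -> block (take n s) j b = block s j b.
Proof. by rewrite /block !take_drop mulSn => le_n; rewrite take_takel //; lia. Qed.

Lemma index_take s n o : index o s < n -> index o (take n s) = index o s.
Proof.
move=> lt_n; case: (boolP (o \in s)) => so.
  by rewrite -{2}(cat_take_drop n s) index_cat in_take ?lt_n.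
by rewrite take_oversize // -(memNindex so) ltnW.
Qed.

Lemma mem_take_index s n o : n <= size s ->
  (o \in take n s) = (o \in s) && (index o s < n).
Proof.
by move=> le_n; rewrite in_take_leq // andb_idl // -index_mem => /leq_trans; apply.
Qed.

Lemma index_block s j b o : uniq s -> o \in block s j b ->
  index o s = b * 2 ^ j + index o (block s j b) /\ index o (block s j b) < 2 ^ j.
Proof.
move=> us oB; set B := block s j b.
have iB : index o B < size B by rewrite index_mem.
have szB : size B <= 2 ^ j /\ size B <= size s - b * 2 ^ j.
  by rewrite /B /block size_take size_drop; case: ifP; lia.
have o_nth : o = nth o s (b * 2 ^ j + index o B).
  by rewrite -nth_drop -(nth_take (n0 := 2 ^ j)) ?nth_index //; lia.
by split; [rewrite {1}o_nth index_uniq //|]; lia.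
Qed.

Lemma block_idP s j b o : uniq s -> o \in block s j b -> block_id s j o = b.
Proof.
move=> us oB; rewrite /block_id; have [-> ltj] := index_block us oB.
by rewrite divnMDl ?expn_gt0 // divn_small ?addn0.
Qed.

Lemma index_lt_block_end s j b o : uniq s -> o \in block s j b ->
  index o s < b.+1 * 2 ^ j.
Proof. by move=> us oB; have [-> ?] := index_block us oB; rewrite mulSn; lia. Qed.

Lemma mem_block_of s j o : o \in s -> o \in block_of s j o.
Proof.
move=> so; have pos := expn_gt0 2 j; rewrite /= in pos.
have eq_i : index o s = block_id s j o * 2 ^ j + index o s %% 2 ^ j by apply: divn_eq.
have lt_mod : index o s %% 2 ^ j < 2 ^ j by rewrite ltn_mod.
have lt_sz : index o s < size s by rewrite index_mem.
rewrite -{1}(nth_index o so) eq_i -nth_drop -(nth_take (n0 := 2 ^ j)) //.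
by apply: mem_nth; rewrite size_take size_drop; case: ifP; lia.
Qed.

End Blocks.

Section Rank.
Variables (O : eqType) (c : O -> nat) (B : seq O).

Definition precedes x y := (c y < c x) || (c x == c y) && (index x B < index y B).
Definition rank o := count (precedes^~ o) B.

Lemma precedes_irr x : precedes x x = false.
Proof. by rewrite /precedes !ltnn andbF. Qed.

Lemma precedes_trans y x z : precedes x y -> precedes y z -> precedes x z.
Proof. by rewrite /precedes; lia. Qed.

Lemma precedes_total x y : x \in B -> y \in B -> x != y ->
  precedes x y || precedes y x.
Proof.
move=> xB yB neq_xy; have : index x B != index y B.
  by apply: contra neq_xy => /eqP eq_i; rewrite -(nth_index x xB) eq_i nth_index.
by rewrite /precedes; lia.
Qed.

Lemma rank_lt x y : x \in B -> precedes x y -> rank x < rank y.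
Proof.
move=> xB xy; apply: (sub_count_lt (fun z zx => precedes_trans zx xy) xB xy).
by rewrite precedes_irr.
Qed.

Lemma rank_lt_size o : o \in B -> rank o < size B.
Proof. by move=> oB; rewrite -count_predT (sub_count_lt _ oB) ?precedes_irr. Qed.

Lemma rank_inj : {in B &, injective rank}.
Proof.
move=> x y xB yB eq_r; apply/eqP; apply: contraT => neq_xy.
by case/orP: (precedes_total xB yB neq_xy) => /rank_lt; rewrite eq_r ltnn; apply.
Qed.

End Rank.

Section Promotion.
Variables (O : eqType) (g : seq O -> O -> nat).
Implicit Types (s : seq O) (o : O).

Definition promotion_time s j o :=
  (block_id s j o).+1 * 2 ^ j + rank (g (block_of s j o)) (block_of s j o) o.

Definition level s n o := \max_(j < n | promotion_time s j o <= n) j.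

Lemma block_end_le_promotion_time s j o :
  (block_id s j o).+1 * 2 ^ j <= promotion_time s j o.
Proof. exact: leq_addr. Qed.

Lemma promotion_time_lt s j o : o \in s ->
  promotion_time s j o < (block_id s j o).+2 * 2 ^ j.
Proof.
move=> so; have := rank_lt_size (g (block_of s j o)) (mem_block_of j so).
have := size_block_le s j (block_id s j o).
by rewrite /promotion_time /block_of mulSn; lia.
Qed.

Lemma expn_le_promotion_time s j o : 2 ^ j <= promotion_time s j o.
Proof. by apply: leq_trans (block_end_le_promotion_time s j o); rewrite leq_pmull. Qed.

Lemma promotion_time_gt s n j o : promotion_time s j o <= n -> j < n.
Proof.
by apply: leq_trans; apply: leq_trans (expn_le_promotion_time s j o); apply: ltn_expl.
Qed.

Lemma promotion_time0 s o : o \in s -> promotion_time s 0 o = (index o s).+1.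
Proof.
move=> so; have := rank_lt_size (g (block_of s 0 o)) (mem_block_of 0 so).
have := size_block_le s 0 (block_id s 0 o).
by rewrite /promotion_time /block_of /block_id expn0 divn1 muln1; lia.
Qed.

Lemma promotion_time_precedes s j x y : uniq s -> y \in s ->
  let B := block_of s j y in
  x \in B -> precedes (g B) B x y -> promotion_time s j x < promotion_time s j y.
Proof.
move=> us sy B xB xy; rewrite /promotion_time /block_of (block_idP us xB) -/B.
by rewrite ltn_add2l rank_lt.
Qed.

Lemma promotion_time_inj s j : uniq s -> {in s &, injective (promotion_time s j)}.
Proof.
move=> us x y sx sy eq_t; have pos := expn_gt0 2 j; rewrite /= in pos.
have id_lt (u v : O) : u \in s -> promotion_time s j u = promotion_time s j v ->
    (block_id s j v).+1 < (block_id s j u).+2.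
  move=> su eq_uv; rewrite -(ltn_pmul2r pos).
  apply: leq_ltn_trans (block_end_le_promotion_time s j v) _.
  by rewrite -eq_uv promotion_time_lt.
have eq_id : block_id s j x = block_id s j y.
  by have := id_lt _ _ sx eq_t; have := id_lt _ _ sy (esym eq_t); lia.
move: eq_t; rewrite /promotion_time /block_of eq_id => /addnI.
by apply: rank_inj; [rewrite -eq_id|]; apply: mem_block_of.
Qed.

Lemma promotion_time_take s n j o : index o s < n ->
  (promotion_time (take n s) j o <= n) = (promotion_time s j o <= n).
Proof.
move=> lt_n; have eq_id : block_id (take n s) j o = block_id s j o.
  by rewrite /block_id index_take.
case: (leqP ((block_id s j o).+1 * 2 ^ j) n) => end_n.
  by rewrite /promotion_time /block_of eq_id block_take.
have := block_end_le_promotion_time s j o.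
have := block_end_le_promotion_time (take n s) j o; rewrite eq_id.
by move=> ge1 ge2; apply/idP/idP; lia.
Qed.

Lemma level_ge s n j o : j < n -> promotion_time s j o <= n -> j <= level s n o.
Proof. by move=> lt_jn; apply: (leq_bigmax_cond (Ordinal lt_jn)). Qed.

Lemma promotion_time_level s n o : o \in s -> index o s < n ->
  promotion_time s (level s n o) o <= n.
Proof.
move=> so lt_n; rewrite /level; elim/big_ind: _ => // [|a b ta tb].
  by rewrite promotion_time0.
by rewrite /maxn; case: ifP.
Qed.

Lemma level_take s n o : index o s < n -> level (take n s) n o = level s n o.
Proof. by move=> lt_n; apply: eq_bigl => j; apply: promotion_time_take. Qed.

Lemma block_end_le_level s n o : o \in s -> index o s < n ->
  (block_id s (level s n o) o).+1 * 2 ^ level s n o <= n.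
Proof.
move=> so lt_n.
exact: leq_trans (block_end_le_promotion_time _ _ _) (promotion_time_level so lt_n).
Qed.

Lemma level_window s n o : o \in s -> index o s < n ->
  n < (block_id s (level s n o) o + 4) * 2 ^ level s n o.
Proof.
move=> so lt_n; set j := level s n o.
have lt_next : n < promotion_time s j.+1 o.
  rewrite ltnNge; apply/negP => le_n.
  by have := level_ge (promotion_time_gt le_n) le_n; rewrite ltnn.
apply: (leq_trans lt_next); apply: leq_trans (ltnW (promotion_time_lt j.+1 so)) _.
rewrite /block_id expnSr divnMA; set b := index o s %/ 2 ^ j.
rewrite mulnA [_ * 2 ^ j * 2]mulnAC leq_mul2r; apply/orP; right.
by have := leq_divM b 2; lia.
Qed.

Lemma level_pred s k o : o \in s -> index o s < k.-1 ->
  promotion_time s (level s k o) o != k -> level s k.-1 o = level s k o.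
Proof.
move=> so lt_o ne_k; have lt_k : index o s < k by apply: leq_trans lt_o (leq_pred k).
have le_k1 : promotion_time s (level s k o) o <= k.-1.
  by have := promotion_time_level so lt_k; move: ne_k; lia.
have le_k := promotion_time_level so lt_o.
apply/eqP; rewrite eqn_leq (level_ge (promotion_time_gt le_k1) le_k1) andbT.
apply: level_ge; last exact: leq_trans le_k (leq_pred k).
exact: leq_trans (promotion_time_gt le_k) (leq_pred k).
Qed.

Lemma index_lt_level_block s n o x : uniq s -> o \in s -> index o s < n ->
  x \in block_of s (level s n o) o -> index x s < n.
Proof.
move=> us so lt_n xB; apply: leq_trans (index_lt_block_end us xB) _.
exact: block_end_le_level.
Qed.

Lemma level_ge_precedes s n o x : uniq s -> o \in s -> index o s < n ->
  let B := block_of s (level s n o) o in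
  x \in B -> precedes (g B) B x o -> level s n o <= level s n x.
Proof.
move=> us so lt_n B xB xo; have le_n := promotion_time_level so lt_n.
have lt_t := promotion_time_precedes us so xB xo.
by apply: level_ge (promotion_time_gt le_n) _; rewrite ltnW ?(leq_trans lt_t).
Qed.

End Promotion.

Section ColorRank.
Variables (O : eqType) (c : O -> nat) (B : seq O).

Definition color_rank o := index (c o) (undup (map c B)).

Lemma color_rank_lt o : o \in B -> color_rank o < num_colors c B.
Proof. by move=> oB; rewrite index_mem mem_undup map_f. Qed.

Lemma color_rank_inj x y : x \in B -> y \in B -> color_rank x = color_rank y -> c x = c y.
Proof.
move=> xB yB; have mem_c z : z \in B -> c z \in undup (map c B).
  by move=> zB; rewrite mem_undup map_f.
move=> eq_r; rewrite -(nth_index 0 (mem_c _ xB)) -/(color_rank x) eq_r.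
by rewrite nth_index ?mem_c.
Qed.

End ColorRank.

Lemma eq_window_mod4 b b' p n : 0 < p ->
  b.+1 * p <= n < (b + 4) * p -> b'.+1 * p <= n < (b' + 4) * p ->
  b %% 4 = b' %% 4 -> b = b'.
Proof.
move=> pos /andP [ge_b lt_b] /andP [ge_b' lt_b'] eq_mod.
have : b.+1 < b' + 4 by rewrite -(ltn_pmul2r pos) (leq_ltn_trans ge_b).
have : b'.+1 < b + 4 by rewrite -(ltn_pmul2r pos) (leq_ltn_trans ge_b').
lia.
Qed.

Section Colors.
Variables (O : eqType) (gamma : nat -> nat) (g : seq O -> O -> nat).
Implicit Types (s : seq O) (o : O).

Definition level_offset j := \sum_(i < j) 4 * gamma (2 ^ i).

Definition level_color s j o :=
  level_offset j + 4 * color_rank (g (block_of s j o)) (block_of s j o) o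
    + block_id s j o %% 4.

Definition online_color s n o := level_color s (level g s n o) o.

Definition online_coloring s := online_color s (size s).

Lemma online_coloring_take s n : n <= size s ->
  {in take n s, online_coloring (take n s) =1 online_color s n}.
Proof.
move=> le_n o; rewrite mem_take_index // => /andP [so lt_n].
rewrite /online_coloring size_takel // /online_color /level_color /block_of /block_id.
by rewrite level_take // index_take // block_take //; apply: block_end_le_level.
Qed.

Lemma level_offsetS j : level_offset j.+1 = level_offset j + 4 * gamma (2 ^ j).
Proof. by rewrite /level_offset big_ord_recr. Qed.

Lemma leq_level_offset i j : i <= j -> level_offset i <= level_offset j.
Proof.
move=> le_ij; rewrite -(subnKC le_ij); elim: (j - i) => [|d IHd]; first by rewrite addn0.
by rewrite addnS level_offsetS (leq_trans IHd) ?leq_addr.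
Qed.

Lemma eq_level_offset i j x :
  level_offset i <= x < level_offset i.+1 -> level_offset j <= x < level_offset j.+1 ->
  i = j.
Proof.
have sep k l : k < l -> level_offset k <= x < level_offset k.+1 ->
    level_offset l <= x -> False.
  move=> lt_kl /andP [_ lt_x] ge_x.
  by have := leq_trans (leq_level_offset lt_kl) ge_x; rewrite leqNgt lt_x.
move=> ri /[dup] rj /andP [ge_j _]; have /andP [ge_i _] := ri.
by case: (ltngtP i j) => // [/sep/(_ ri ge_j) | /sep/(_ rj ge_i)].
Qed.

Lemma level_offset_le k j : {homo gamma : m n / m <= n} -> 2 ^ j <= k ->
  level_offset j.+1 <= j.+1 * (4 * gamma k).
Proof.
move=> gamma_mono le_k; rewrite -[j.+1 in X in _ <= X * _]card_ord -sum_nat_const.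
apply: leq_sum => i _; rewrite leq_mul2l gamma_mono ?orbT // (leq_trans _ le_k) //.
by rewrite leq_exp2l // -ltnS.
Qed.

Lemma num_recolorings_online_coloring s k : uniq s -> k <= size s ->
  num_recolorings (take k.-1 s) (online_coloring (take k.-1 s))
    (online_coloring (take k s)) <= up_log 2 k.
Proof.
move=> us le_k; have le_k1 := leq_trans (leq_pred k) le_k.
rewrite (eq_in_num_recolorings (new2 := online_color s k)
    (online_coloring_take le_k1)); last first.
  move=> o; rewrite mem_take_index // => /andP [so lt_o].
  by rewrite online_coloring_take // mem_take_index // so (leq_trans lt_o (leq_pred k)).
rewrite /num_recolorings -size_filter; set D := filter _ _.
have recolored o : o \in D ->
    [/\ o \in s, index o s < k.-1 & promotion_time g s (level g s k o) o = k].
  rewrite mem_filter mem_take_index // => /andP [ne_c /andP [so lt_o]].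
  split=> //; apply/eqP; apply: contraNT ne_c => ne_k.
  by rewrite /online_color level_pred.
rewrite -(size_map (level g s k)) -(size_iota 1 (up_log 2 k)); apply: uniq_leq_size.
  rewrite map_inj_in_uniq ?filter_uniq ?take_uniq // => x y xD yD eq_l.
  have [sx _ tx] := recolored x xD; have [sy _ ty] := recolored y yD.
  apply: (promotion_time_inj (g := g) (j := level g s k x) us sx sy).
  by rewrite tx eq_l ty.
move=> _ /mapP [o oD ->]; have [so lt_o t_o] := recolored o oD.
have le_up : level g s k o <= up_log 2 k.
  by apply: exp_le_up_log => //; rewrite -{2}t_o expn_le_promotion_time.
rewrite mem_iota add1n ltnS le_up andbT lt0n; apply/eqP => lev0.
by move: t_o lt_o; rewrite lev0 promotion_time0 //; lia.
Qed.

Variable F : pred O.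
Hypothesis g_colors : forall S, uniq S -> all F S -> num_colors (g S) S <= gamma (size S).
Variable s : seq O.
Hypotheses (us : uniq s) (Fs : all F s).

Lemma level_color_bounds j o : o \in s -> (block_id s j o).+1 * 2 ^ j <= size s ->
  level_offset j <= level_color s j o < level_offset j.+1.
Proof.
move=> so end_le; rewrite level_offsetS /level_color.
have rank_lt : color_rank (g (block_of s j o)) (block_of s j o) o < gamma (2 ^ j).
  rewrite -(size_block end_le); apply: leq_trans (color_rank_lt _ (mem_block_of j so)) _.
  exact: g_colors (block_uniq _ _ us) (block_all _ _ Fs).
by have := ltn_pmod (block_id s j o) (isT : 0 < 4); lia.
Qed.

Lemma online_color_eq n o o' : n <= size s ->
  o \in s -> index o s < n -> o' \in s -> index o' s < n ->
  online_color s n o' = online_color s n o ->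
  let j := level g s n o in let B := block_of s j o in
  [/\ level g s n o' = j, o' \in B & g B o' = g B o].
Proof.
move=> le_n so lt_n so' lt_n' eq_c j B.
have bounds x : x \in s -> index x s < n ->
    level_offset (level g s n x) <= online_color s n x < level_offset (level g s n x).+1.
  move=> sx lt_x; apply: (level_color_bounds sx).
  exact: leq_trans (block_end_le_level g sx lt_x) le_n.
have eq_j : level g s n o' = j.
  by apply: (eq_level_offset (bounds _ so' lt_n')); rewrite eq_c bounds.
have window x : x \in s -> index x s < n -> let l := level g s n x in
    (block_id s l x).+1 * 2 ^ l <= n < (block_id s l x + 4) * 2 ^ l.
  by move=> sx lt_x /=; rewrite block_end_le_level ?level_window.
move: eq_c; rewrite /online_color /level_color eq_j -/j -/B.
have := ltn_pmod (block_id s j o) (isT : 0 < 4).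
have := ltn_pmod (block_id s j o') (isT : 0 < 4).
move=> lt_mod' lt_mod eq_c.
have eq_id : block_id s j o' = block_id s j o.
  apply: (eq_window_mod4 (expn_gt0 2 j) _ (window _ so lt_n)); last by rewrite -/j; lia.
  by have := window _ so' lt_n'; rewrite /= eq_j.
have eq_B : block_of s j o' = B by rewrite /B /block_of eq_id.
rewrite eq_B in eq_c; have o'B : o' \in B by rewrite -eq_B mem_block_of.
by split=> //; apply: (color_rank_inj o'B (mem_block_of j so)); lia.
Qed.

Lemma num_colors_online_coloring k : {homo gamma : m n / m <= n} -> k <= size s ->
  num_colors (online_coloring (take k s)) (take k s)
    <= 4 * gamma k * (up_log 2 k).+1.
Proof.
move=> gamma_mono le_k; rewrite (eq_in_num_colors (online_coloring_take le_k)).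
apply: num_colors_le => o; rewrite mem_take_index // => /andP [so lt_o].
have end_le := block_end_le_level g so lt_o.
have pow_le : 2 ^ level g s k o <= k by apply: leq_trans end_le; rewrite leq_pmull.
have /andP [_ lt_c] := level_color_bounds so (leq_trans end_le le_k).
apply: leq_trans lt_c (leq_trans (level_offset_le gamma_mono pow_le) _).
by rewrite mulnC leq_mul2l ltnS exp_le_up_log ?orbT.
Qed.

End Colors.

Section ConflictFree.
Variables (O : eqType) (Q : Type) (rel : Q -> O -> bool) (F : pred O).
Variables (gamma : nat -> nat) (g : seq O -> O -> nat).
Hypothesis g_unimax : forall S, uniq S -> all F S -> unimax rel S (g S).
Hypothesis g_colors : forall S, uniq S -> all F S -> num_colors (g S) S <= gamma (size S).
Variable s : seq O.
Hypotheses (us : uniq s) (Fs : all F s).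

Lemma conflict_free_online_color k : k <= size s ->
  conflict_free rel (take k s) (online_color gamma g s k).
Proof.
move=> le_k q has_q.
have mem_k o := mem_take_index o le_k.
pose at_level j := has (fun o => rel q o && (level g s k o == j)) (take k s).
have ex_level : exists j, at_level j.
  case/hasP: has_q => o ko rel_o; exists (level g s k o).
  by rewrite /at_level; apply/hasP; exists o; rewrite ?rel_o ?eqxx.
have level_le j : at_level j -> j <= k.
  move=> /hasP [o]; rewrite mem_k => /andP [so lt_k] /andP [_ /eqP <-].
  exact/ltnW/(promotion_time_gt (promotion_time_level g so lt_k)).
case: (ex_maxnP ex_level level_le) => j /hasP [p].
rewrite mem_k => /andP [sp lt_p] /andP [rel_p /eqP lev_p] max_j.
set B := block_of s j p.
have pB : p \in B by apply: mem_block_of.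
have unimax_B : unimax rel B (g B).
  by apply: g_unimax; [apply: block_uniq | apply: block_all].
have [|m /andP [mB rel_m] top_m] := unimax_B q.
  by apply/hasP; exists p.
have sm : m \in s := block_subset mB.
have lt_m : index m s < k.
  by apply: (index_lt_level_block (g := g) us sp lt_p); rewrite lev_p.
have lev_m : level g s k m = j.
  apply/eqP; rewrite eqn_leq max_j /=; last first.
    by rewrite /at_level; apply/hasP; exists m; rewrite ?mem_k ?sm ?lt_m ?rel_m ?eqxx.
  have [->|neq_mp] := eqVneq m p; first by rewrite lev_p.
  rewrite -lev_p (level_ge_precedes (g := g) us) // lev_p // /precedes.
  by rewrite top_m // eq_sym.
exists m; first by rewrite mem_k sm lt_m rel_m.
move=> o; rewrite mem_k => /andP [so lt_o] rel_o neq_om; apply/eqP => eq_c.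
have [_] := online_color_eq g_colors us Fs le_k sm lt_m so lt_o eq_c.
have eq_Bm : block_of s (level g s k m) m = B.
  by rewrite lev_m /B /block_of (block_idP us mB).
by rewrite eq_Bm => oB eq_g; have := top_m o oB rel_o neq_om; rewrite eq_g ltnn.
Qed.

Lemma conflict_free_online_coloring k : k <= size s ->
  conflict_free rel (take k s) (online_coloring gamma g (take k s)).
Proof.
move=> le_k; apply: eq_in_conflict_free (online_coloring_take gamma g le_k) _.
exact: conflict_free_online_color.
Qed.

End ConflictFree.

Theorem mainTheorem7 (O : eqType) (Q : Type) (rel : Q -> O -> bool)
    (F : pred O) (gamma : nat -> nat) :
  {homo gamma : m n / m <= n} ->
  (forall S : seq O, uniq S -> all F S ->
     exists col : O -> nat,
       unimax rel S col /\ num_colors col S <= gamma (size S)) ->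
  exists C : nat, exists A : seq O -> (O -> nat),
    forall s : seq O, uniq s -> all F s ->
    forall k, 1 <= k <= size s ->
      [/\ conflict_free rel (take k s) (A (take k s)),
          num_colors (A (take k s)) (take k s)
            <= C * gamma k * (up_log 2 k).+1 ^ 2
        & num_recolorings (take k.-1 s) (A (take k.-1 s)) (A (take k s))
            <= up_log 2 k].
Proof.
move=> gamma_mono unimax_colorings.
have /functional_choice [g g_spec] : forall S, exists col : O -> nat, uniq S -> all F S ->
    unimax rel S col /\ num_colors col S <= gamma (size S).
  move=> S; have [/andP [uS FS] | bad] := boolP (uniq S && all F S).
    by have [col col_spec] := unimax_colorings S uS FS; exists col.
  by exists (fun=> 0) => uS FS; rewrite uS FS in bad.
have g_unimax S : uniq S -> all F S -> unimax rel S (g S).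
  by move=> uS FS; case: (g_spec S uS FS).
have g_colors S : uniq S -> all F S -> num_colors (g S) S <= gamma (size S).
  by move=> uS FS; case: (g_spec S uS FS).
exists 4, (online_coloring gamma g) => s us Fs k /andP [_ le_k]; split.
- exact: (conflict_free_online_coloring g_unimax g_colors us Fs le_k).
- apply: leq_trans (num_colors_online_coloring g_colors us Fs gamma_mono le_k) _.
  by rewrite -mulnn mulnA leq_pmulr.
- exact: (num_recolorings_online_coloring gamma g us le_k).
Qed.
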